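(* Let $b,\beta_1,\beta_2,\gamma,\alpha,\lambda,\varepsilon_1,\varepsilon_2$ be positive real numbers and $\beta=\beta_1+\beta_2$. Consider the planar system $$s'=b+\gamma+(\varepsilon_2-b-\beta-\gamma)s-\gamma i-\varepsilon_2 s^2+(\varepsilon_1-\varepsilon_2-\lambda)is,$$ $$i'=\beta_1 s+(\varepsilon_2-\varepsilon_1-\alpha-b)i+(\lambda-\varepsilon_2)is+(\varepsilon_1-\varepsilon_2)i^2,$$ and let $\overset{o}{D}_1$ be the interior of $D_1=\{(s,i): s\ge0,\ i\ge0,\ s+i\le1\}$. Then every nondegenerate rest point of this system in $\overset{o}{D}_1$ is hyperbolic.
   Context: A rest point is nondegenerate if all eigenvalues of the linearization there are nonzero, and hyperbolic if all these eigenvalues have nonzero real parts. *)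

From HB Require Import structures.
From mathcomp Require Import all_boot all_order all_algebra.
From mathcomp Require Import all_classical all_reals all_analysis.
From mathcomp Require Import complex.
Set Implicit Arguments. Unset Strict Implicit. Unset Printing Implicit Defensive.
Import Order.TTheory GRing.Theory Num.Theory.
Import numFieldNormedType.Exports.
Local Open Scope ring_scope.
Local Open Scope classical_set_scope.

Section Defs.
Variable R : realType.
Variables b beta1 beta2 gamma alpha lambda eps1 eps2 : R.

Definition beta := beta1 + beta2.

Definition fs (s i : R) : R :=
  b + gamma + (eps2 - b - beta - gamma) * s - gamma * i - eps2 * s ^+ 2
  + (eps1 - eps2 - lambda) * i * s.

Definition fi (s i : R) : R :=
  beta1 * s + (eps2 - eps1 - alpha - b) * i + (lambda - eps2) * i * s
  + (eps1 - eps2) * i ^+ 2.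

Definition sys_rest_point (p : R * R) : Prop := fs p.1 p.2 = 0 /\ fi p.1 p.2 = 0.

Definition jacobian (p : R * R) : 'M[R]_2 :=
  \matrix_(k < 2, l < 2)
    (let f := if k == 0 :> nat then fs else fi in
     if l == 0 :> nat then derive1 (fun s => f s p.2) p.1
     else derive1 (fun i => f p.1 i) p.2).

Definition lin_eigenvalue (p : R * R) (z : R[i]) : bool :=
  eigenvalue (map_mx (fun x : R => (x%:C)%C) (jacobian p)) z.

Definition sys_nondegenerate (p : R * R) : Prop :=
  forall z : R[i], lin_eigenvalue p z -> z != 0.

Definition sys_hyperbolic (p : R * R) : Prop :=
  forall z : R[i], lin_eigenvalue p z -> Re z != 0.

End Defs.

Definition D1 (R : realType) : set (R * R) :=
  [set p | 0 <= p.1 /\ 0 <= p.2 /\ p.1 + p.2 <= 1].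

(* At an interior rest point the trace of the linearization is negative: multiplying
   it by s i and adding multiples of the two rest-point equations writes it as a sum
   of negative terms.  A real 2x2 matrix with nonzero trace has no nonzero purely
   imaginary eigenvalue, since at z = i y the imaginary part of the characteristic
   polynomial is - tr y. *)
From Pilot Require Import Defs.
From HB Require Import structures.
From mathcomp Require Import all_boot all_order all_algebra.
From mathcomp Require Import all_classical all_reals all_analysis.
From mathcomp Require Import complex ring lra.
Set Implicit Arguments. Unset Strict Implicit. Unset Printing Implicit Defensive.
Import Order.TTheory GRing.Theory Num.Theory.
Import numFieldNormedType.Exports.
Local Open Scope ring_scope.
Local Open Scope classical_set_scope.

Lemma interior_D1 (R : realType) (p : R * R) : interior (@D1 R) p ->
  0 < p.1 /\ 0 < p.2 /\ p.1 + p.2 < 1.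
Proof.
case: p => s i /nbhs_ballP [e /= e0 De].
have inD1 d1 d2 : `|d1| < e -> `|d2| < e -> D1 (s + d1, i + d2).
  move=> d1e d2e; apply: De; split; rewrite /ball /= opprD addNKr normrN //.
have he : `|e / 2| < e by rewrite gtr0_norm ?divr_gt0 //; lra.
have hNe : `|- (e / 2)| < e by rewrite normrN.
have h0 : `|0 : R| < e by rewrite normr0.
have [_ [_ /= Ds]] := inD1 _ _ he h0.
have [/= Ls _] := inD1 _ _ hNe h0.
have [_ [/= Li _]] := inD1 _ _ h0 hNe.
lra.
Qed.

Lemma derive1_quadratic (R : realType) (a0 a1 a2 x : R) :
  derive1 (fun y => a0 + a1 * y + a2 * y ^+ 2) x = a1 + 2 * a2 * x.
Proof.
have -> : (fun y => a0 + a1 * y + a2 * y ^+ 2) = horner (a0%:P + a1 *: 'X + a2 *: 'X^2).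
  by apply/funext => y; rewrite !hornerE.
rewrite -derivE /= !derivD derivC !derivZ derivX derivXn /= !hornerE; ring.
Qed.

Lemma horner_char_poly_mx2 (R : comNzRingType) (A : 'M[R]_2) (x : R) :
  (char_poly A).[x] = x ^+ 2 - \tr A * x + \det A.
Proof.
rewrite horner_coef size_char_poly !big_ord_recr big_ord0 /=.
have := char_poly_monic A; rewrite monicE /lead_coef size_char_poly => /eqP c2.
rewrite c2 (char_poly_trace A isT) char_poly_det expr1 expr0 sqrrN expr1n; ring.
Qed.

Lemma eigenvalue_map_mx2_Re_eq0 (R : rcfType) (A : 'M[R]_2) (z : R[i]) :
  \tr A != 0 -> eigenvalue (map_mx (fun x : R => (x%:C)%C) A) z -> Re z = 0 -> z = 0.
Proof.
move=> trA; rewrite eigenvalue_root_char /root horner_char_poly_mx2.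
rewrite trace_map_mx det_map_mx; case: z => x y /=.
rewrite -complexRe /= => + /(congr1 (@complex.Re R)) /= x0; rewrite {}x0.
simpc; rewrite eq_complex /= => /andP [_ /eqP Imz].
have /eqP : \tr A * y = 0 by lra.
by rewrite mulf_eq0 (negPf trA) /= => /eqP ->.
Qed.

Section Linearization.
Variables (R : realType) (b beta1 beta2 gamma alpha lambda eps1 eps2 : R).

Local Notation Fs := (fs b beta1 beta2 gamma lambda eps1 eps2).
Local Notation Fi := (fi b beta1 alpha lambda eps1 eps2).
Local Notation J := (Defs.jacobian b beta1 beta2 gamma alpha lambda eps1 eps2).

Lemma mxtrace_jacobian (s i : R) : \tr (J (s, i)) =
  (eps2 - b - beta beta1 beta2 - gamma) - 2 * eps2 * s + (eps1 - eps2 - lambda) * i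
  + ((eps2 - eps1 - alpha - b) + (lambda - eps2) * s + 2 * (eps1 - eps2) * i).
Proof.
rewrite /mxtrace !big_ord_recr big_ord0 /= !mxE /=.
have -> : (fun x => Fs x i) = (fun x => (b + gamma - gamma * i)
    + ((eps2 - b - beta beta1 beta2 - gamma) + (eps1 - eps2 - lambda) * i) * x
    + (- eps2) * x ^+ 2).
  by apply/funext => x; rewrite /fs; ring.
have -> : (fun y => Fi s y) = (fun y => beta1 * s
    + ((eps2 - eps1 - alpha - b) + (lambda - eps2) * s) * y + (eps1 - eps2) * y ^+ 2).
  by apply/funext => y; rewrite /fi; ring.
rewrite !derive1_quadratic; ring.
Qed.

(* The part of s i tr J without a sign; it is positive at interior rest points
   because fs + fi vanishes there. *)
Let X (s i : R) : R := b + gamma + eps2 * (s + i) - eps1 * i.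

Lemma fs_add_fi (s i : R) :
  Fs s i + Fi s i = (1 - s - i) * X s i - beta2 * s - alpha * i.
Proof. by rewrite /fs /fi /beta /X; ring. Qed.

Lemma mulr_mxtrace_jacobian (s i : R) : s * i * \tr (J (s, i)) =
  i * Fs s i + s * Fi s i
  - i * b * (1 - s) - i * gamma * (1 - s - i) - beta1 * s ^+ 2 - i * s * X s i.
Proof. by rewrite mxtrace_jacobian /fs /fi /beta /X; ring. Qed.

Hypotheses (hb : 0 < b) (hbeta1 : 0 < beta1) (hbeta2 : 0 < beta2)
  (hgamma : 0 < gamma) (halpha : 0 < alpha).

Lemma mxtrace_jacobian_lt0 (s i : R) : 0 < s -> 0 < i -> s + i < 1 ->
  sys_rest_point b beta1 beta2 gamma alpha lambda eps1 eps2 (s, i) ->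
  \tr (J (s, i)) < 0.
Proof.
move=> s0 i0 si1 [/= Fs0 Fi0].
have X0 : 0 < X s i.
  have := fs_add_fi s i; rewrite Fs0 Fi0 => sum0.
  have bs0 := mulr_gt0 hbeta2 s0; have ai0 := mulr_gt0 halpha i0.
  have : 0 < (1 - s - i) * X s i by lra.
  by rewrite pmulr_rgt0 //; lra.
have : s * i * \tr (J (s, i)) < 0.
  rewrite mulr_mxtrace_jacobian Fs0 Fi0 !mulr0 add0r.
  have h1 : 0 < i * b * (1 - s) by rewrite !mulr_gt0 //; lra.
  have h2 : 0 < i * gamma * (1 - s - i) by rewrite !mulr_gt0 //; lra.
  have h3 : 0 < beta1 * s ^+ 2 by rewrite mulr_gt0 // exprn_gt0.
  have h4 : 0 < i * s * X s i by rewrite !mulr_gt0.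
  lra.
by rewrite pmulr_rlt0 // mulr_gt0.
Qed.

End Linearization.

Lemma sys_hyperbolic_of_nondegenerate (R : realType)
    (b beta1 beta2 gamma alpha lambda eps1 eps2 : R) (p : R * R) :
  \tr (Defs.jacobian b beta1 beta2 gamma alpha lambda eps1 eps2 p) != 0 ->
  sys_nondegenerate b beta1 beta2 gamma alpha lambda eps1 eps2 p ->
  sys_hyperbolic b beta1 beta2 gamma alpha lambda eps1 eps2 p.
Proof.
move=> trJ nondeg z Jz.
exact: contra_neq (eigenvalue_map_mx2_Re_eq0 trJ Jz) (nondeg z Jz).
Qed.

Theorem corollary2p5 (R : realType)
  (b beta1 beta2 gamma alpha lambda eps1 eps2 : R)
  (hb : 0 < b) (hbeta1 : 0 < beta1) (hbeta2 : 0 < beta2) (hgamma : 0 < gamma)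
  (halpha : 0 < alpha) (hlambda : 0 < lambda) (heps1 : 0 < eps1) (heps2 : 0 < eps2)
  (p : R * R) :
  interior (@D1 R) p ->
  sys_rest_point b beta1 beta2 gamma alpha lambda eps1 eps2 p ->
  sys_nondegenerate b beta1 beta2 gamma alpha lambda eps1 eps2 p ->
  sys_hyperbolic b beta1 beta2 gamma alpha lambda eps1 eps2 p.
Proof.
case: p => s i /interior_D1 /= [s0 [i0 si1]] rest nondeg.
apply: sys_hyperbolic_of_nondegenerate nondeg.
exact/ltr0_neq0/(mxtrace_jacobian_lt0 hb hbeta1 hbeta2 hgamma halpha s0 i0 si1 rest).
Qed.
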